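(* There is an absolute constant $C$ such that the following holds. Let $G=(V,E)$ be an $m_\ell \times m_s$ grid graph ($m_\ell\ge m_s$, $m_\ell \ge 3$, $m_s\ge 2$) with every vertex occupied by a robot, and let $E' \subseteq E$ be any set of pairwise vertex-disjoint edges. Then there is a sequence of at most $C$ valid synchronous moves after which, for every edge $(v_1,v_2)\in E'$, the robot initially at $v_1$ is at $v_2$ and the robot initially at $v_2$ is at $v_1$, while every robot initially at a vertex not covered by $E'$ is back at its initial vertex. (This operation is denoted $\textsc{flip}(E')$.)
   Context: The $m_\ell \times m_s$ grid graph has vertex set $\{1,\dots,m_\ell\}\times\{1,\dots,m_s\}$ with edges between vertices at $\ell_1$-distance 1. Valid synchronous moves: from step $t$ to $t+1$ each robot either stays put or moves to an adjacent vertex, subject to (i) no two robots occupying the same vertex afterwards and (ii) no two robots traversing the same edge in opposite directions. *)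

From mathcomp Require Import all_boot.
Set Implicit Arguments. Unset Strict Implicit. Unset Printing Implicit Defensive.

Definition gvert (ml ms : nat) : finType := ('I_ml * 'I_ms)%type.

Definition gadj (ml ms : nat) (u v : gvert ml ms) : bool :=
  ((u.1 == v.1 :> nat) && ((u.2.+1 == v.2 :> nat) || (v.2.+1 == u.2 :> nat))) ||
  ((u.2 == v.2 :> nat) && ((u.1.+1 == v.1 :> nat) || (v.1.+1 == u.1 :> nat))).

(* Robots are labelled by their initial vertex (every vertex is occupied);
   a configuration maps each robot to its current vertex. *)
Definition config (ml ms : nat) := gvert ml ms -> gvert ml ms.

Definition valid_move (ml ms : nat) (p q : config ml ms) : Prop :=
  (forall r, q r = p r \/ gadj (p r) (q r)) /\
  (forall r1 r2, q r1 = q r2 -> r1 = r2) /\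
  (forall r1 r2, p r1 <> p r2 -> q r1 = p r2 -> q r2 <> p r1).

Definition disjoint_edges (ml ms : nat) (M : {set gvert ml ms * gvert ml ms}) : Prop :=
  (forall e, e \in M -> gadj e.1 e.2) /\
  (forall e f, e \in M -> f \in M -> e <> f ->
     [/\ e.1 <> f.1, e.1 <> f.2, e.2 <> f.1 & e.2 <> f.2]).

Definition covered (ml ms : nat) (M : {set gvert ml ms * gvert ml ms}) (v : gvert ml ms) : Prop :=
  exists2 e, e \in M & (v = e.1 \/ v = e.2).

Definition flip_result (ml ms : nat) (M : {set gvert ml ms * gvert ml ms}) (c : config ml ms) : Prop :=
  (forall e, e \in M -> c e.1 = e.2 /\ c e.2 = e.1) /\
  (forall v, ~ covered M v -> c v = v).

From mathcomp Require Import all_boot zify.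
Set Implicit Arguments. Unset Strict Implicit. Unset Printing Implicit Defensive.

(* Every edge lies in a 3 x 2 block of the grid, anchored at the componentwise
   minimum of its endpoints (moved back inside the grid if needed).  For each of
   the seven adjacent pairs of cells of a 3 x 2 block there is a sequence of at
   most five valid moves inside the block that exchanges the two cells and puts
   the four other robots back.  Sorting the edges of E' by the residues of their
   anchor modulo (3, 2) and by the pair of cells they occupy gives 42 classes;
   within a class the blocks are pairwise disjoint, so their exchanges run in
   parallel, and running the classes one after another takes 150 moves. *)

Section Run.
Variable T : Type.

Definition run (s : seq (T -> T)) : T -> T := foldl (fun f g => g \o f) id s.

Lemma run_rcons s g : run (rcons s g) = g \o run s.
Proof. by rewrite /run foldl_rcons. Qed.

Lemma run_cat s1 s2 : run (s1 ++ s2) =1 run s2 \o run s1.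
Proof.
elim/last_ind: s2 => [|s2 g IH] x; first by rewrite cats0.
by rewrite -rcons_cat !run_rcons /= IH.
Qed.

Lemma run_map_inj (A : eqType) (f : A -> T -> T) s :
  {in s, forall a, injective (f a)} -> injective (run (map f s)).
Proof.
elim/last_ind: s => [|s a IH] inj_f; first by [].
rewrite map_rcons run_rcons; apply: inj_comp; first by apply: inj_f; rewrite mem_rcons mem_head.
by apply: IH => b sb; apply: inj_f; rewrite mem_rcons inE sb orbT.
Qed.

End Run.

(* Cell [n] of a 3 x 2 block sits in column [n %% 3] and row [n %/ 3]. *)
Definition cells := iota 0 6.

Lemma cellsP (P : pred nat) : all P cells -> forall n, n < 6 -> P n.
Proof. by move=> /allP allP n n6; apply: allP; rewrite mem_iota. Qed.

Definition ladj (n m : nat) : bool :=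
  ((n %% 3 == m %% 3) && (((n %/ 3).+1 == m %/ 3) || ((m %/ 3).+1 == n %/ 3))) ||
  ((n %/ 3 == m %/ 3) && (((n %% 3).+1 == m %% 3) || ((m %% 3).+1 == n %% 3))).

Definition table (t : seq nat) (n : nat) : nat := nth n t n.

Definition local_step (t : seq nat) : bool :=
  all (fun n => [&& table t n < 6, (table t n == n) || ladj n (table t n),
                 (table t (table t n) == n) ==> (table t n == n) &
                 all (fun m => (table t n == table t m) ==> (n == m)) cells]) cells.

Lemma local_stepP t n : local_step t -> n < 6 ->
  [/\ table t n < 6, table t n = n \/ ladj n (table t n),
      table t (table t n) = n -> table t n = n &
      forall m, m < 6 -> table t n = table t m -> n = m].
Proof.
move=> /cellsP step n6; have /and4P [lt6 moves noswap inj] := step n n6.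
split => //.
- by case/orP: moves => [/eqP|]; auto.
- by move=> back; move/implyP: noswap; rewrite back eqxx => /(_ isT) /eqP.
- by move=> m m6 eqnm; move/cellsP/(_ m m6): inj; rewrite eqnm eqxx => /eqP.
Qed.

Definition lrun (w : seq (seq nat)) : nat -> nat := run (map table w).

Definition maps_cells (g : nat -> nat) := forall n, n < 6 -> g n < 6.

Lemma lrun_cells w : all local_step w -> maps_cells (lrun w).
Proof.
elim/last_ind: w => [_ n n6 //|w t IH].
rewrite all_rcons => /andP [step_t step_w] n n6.
by rewrite /lrun map_rcons run_rcons; case: (local_stepP step_t (IH step_w n n6)).
Qed.

Definition swap (i j n : nat) : nat := if n == i then j else if n == j then i else n.

Definition keys : seq (nat * nat) := [:: (0,1); (0,3); (1,2); (1,4); (2,5); (3,4); (4,5)].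
Definition gadgets : seq (seq (seq nat)) := [::
 [:: [:: 1; 2; 5; 0; 3; 4]; [:: 0; 4; 1; 3; 5; 2]; [:: 3; 0; 2; 4; 1; 5]];
 [:: [:: 1; 2; 5; 0; 3; 4]; [:: 0; 4; 1; 3; 5; 2]; [:: 3; 0; 1; 4; 5; 2]; [:: 0; 2; 5; 3; 1; 4]; [:: 1; 4; 2; 0; 3; 5]];
 [:: [:: 0; 4; 1; 3; 5; 2]; [:: 3; 0; 2; 4; 1; 5]; [:: 1; 2; 5; 0; 3; 4]];
 [:: [:: 0; 2; 5; 3; 1; 4]; [:: 3; 0; 1; 4; 5; 2]; [:: 1; 4; 2; 0; 3; 5]];
 [:: [:: 0; 2; 5; 3; 1; 4]; [:: 0; 2; 5; 3; 1; 4]; [:: 1; 4; 2; 0; 3; 5]; [:: 3; 0; 1; 4; 5; 2]; [:: 0; 4; 1; 3; 5; 2]];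
 [:: [:: 3; 0; 1; 4; 5; 2]; [:: 0; 2; 5; 3; 1; 4]; [:: 1; 4; 2; 0; 3; 5]];
 [:: [:: 0; 2; 5; 3; 1; 4]; [:: 1; 4; 2; 0; 3; 5]; [:: 3; 0; 1; 4; 5; 2]]].

(* [gadget k] is a sequence of local steps exchanging the two cells of
   [nth (0, 0) keys k]; this is checked by computation in [gadget_kind_swap]. *)
Definition gadget (k : nat) : seq (seq nat) := nth [::] gadgets k.
Definition kind (i j : nat) : nat := index (minn i j, maxn i j) keys.

Lemma gadget_local_step k : all local_step (gadget k).
Proof.
have all_ok : all (all local_step) gadgets by vm_compute.
have [k_lt|k_ge] := ltnP k (size gadgets); last by rewrite /gadget nth_default.
exact: (allP all_ok _ (mem_nth [::] k_lt)).
Qed.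

Lemma gadget_kind_swap i j : i < 6 -> j < 6 -> ladj i j ->
  kind i j < size keys /\ forall n, n < 6 -> lrun (gadget (kind i j)) n = swap i j n.
Proof.
have all_ok : all (fun i => all (fun j => ladj i j ==> (kind i j < size keys) &&
                  all (fun n => lrun (gadget (kind i j)) n == swap i j n) cells) cells) cells.
  by vm_compute.
move=> i6 j6 adj; move/cellsP/(_ i i6)/cellsP/(_ j j6): all_ok.
rewrite adj => /andP [-> /cellsP swap_ok]; split=> // n n6.
exact/eqP/swap_ok.
Qed.

Section Grid.
Variables ml ms : nat.
Local Notation V := (gvert ml ms).

Definition valid_step (s : V -> V) : Prop :=
  [/\ forall v, s v = v \/ gadj v (s v), injective s & forall v, s (s v) = v -> s v = v].

Lemma valid_move_step (p : config ml ms) s : injective p -> valid_step s -> valid_move p (s \o p).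
Proof.
move=> inj_p [moves inj_s noswap]; split; [|split].
- by move=> r; apply: moves.
- by move=> r1 r2 /inj_s /inj_p.
- move=> r1 r2 neq /= e1 e2; apply: neq.
  have /noswap : s (s (p r1)) = p r1 by rewrite e1.
  by rewrite e1.
Qed.

Lemma gvert_eq (u v : V) : u.1 = v.1 :> nat -> u.2 = v.2 :> nat -> u = v.
Proof. by case: u v => [u1 u2] [v1 v2] /= /val_inj -> /val_inj ->. Qed.

Lemma gadj_irr (v : V) : gadj v v = false.
Proof. by case: v => v1 v2; rewrite /gadj /=; lia. Qed.

Definition in_block (a v : V) : bool :=
  [&& a.1 <= v.1 < a.1 + 3, a.2 <= v.2 < a.2 + 2, a.1 + 3 <= ml & a.2 + 2 <= ms].
Definition block_index (a v : V) : nat := (v.1 - a.1) + 3 * (v.2 - a.2).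
Definition block_vert (a : V) (n : nat) : V :=
  (insubd a.1 (a.1 + n %% 3), insubd a.2 (a.2 + n %/ 3)).

Section Block.
Variables a v : V.
Hypothesis av : in_block a v.

Lemma block_index_lt : block_index a v < 6.
Proof. by move: av; rewrite /in_block /block_index; lia. Qed.

Lemma block_vert_coord n : n < 6 ->
  (block_vert a n).1 = a.1 + n %% 3 :> nat /\ (block_vert a n).2 = a.2 + n %/ 3 :> nat.
Proof.
move: av; rewrite /in_block /block_vert /= !val_insubd => /and4P [_ _ fit1 fit2] n6.
by split; case: ifP => // /negbT; lia.
Qed.

Lemma in_block_vert n : n < 6 -> in_block a (block_vert a n).
Proof.
move=> n6; have [e1 e2] := block_vert_coord n6.
by move: av; rewrite /in_block e1 e2; lia.
Qed.

Lemma block_vertK n : n < 6 -> block_index a (block_vert a n) = n.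
Proof. by move=> n6; have [e1 e2] := block_vert_coord n6; rewrite /block_index e1 e2; lia. Qed.

Lemma block_indexK : block_vert a (block_index a v) = v.
Proof.
have [e1 e2] := block_vert_coord block_index_lt.
by apply: gvert_eq; rewrite ?e1 ?e2; move: av; rewrite /in_block /block_index; lia.
Qed.

Lemma ladj_block w : in_block a w -> ladj (block_index a v) (block_index a w) = gadj v w.
Proof.
move: av; case: a v w => [a1 a2] [v1 v2] [w1 w2].
by rewrite /in_block /block_index /ladj /gadj /= => ? ?; apply/idP/idP; lia.
Qed.

End Block.

Lemma block_index_inj a u w : in_block a u -> in_block a w ->
  block_index a u = block_index a w -> u = w.
Proof. by move=> au aw eq_uw; rewrite -(block_indexK au) -(block_indexK aw) eq_uw. Qed.

Section BlockMap.
Variable A : pred V.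
Hypothesis A_disjoint : forall a b v, A a -> A b -> in_block a v -> in_block b v -> a = b.

Definition block_of (v : V) : option V := [pick a | A a && in_block a v].

Definition blockmap (g : nat -> nat) (v : V) : V :=
  if block_of v is Some a then block_vert a (g (block_index a v)) else v.

Lemma block_ofP v a : block_of v = Some a -> A a /\ in_block a v.
Proof. by rewrite /block_of; case: pickP => [b /andP [Ab bv] [<-] | //]. Qed.

Lemma block_of_eq a v : A a -> in_block a v -> block_of v = Some a.
Proof.
move=> Aa av; rewrite /block_of; case: pickP => [b /andP [Ab bv] | none].
  by rewrite (A_disjoint Ab Aa bv av).
by move: (none a); rewrite Aa av.
Qed.

Lemma blockmap_in g a v : A a -> in_block a v ->
  blockmap g v = block_vert a (g (block_index a v)).
Proof. by move=> Aa av; rewrite /blockmap (block_of_eq Aa av). Qed.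

Lemma block_of_blockmap g v : maps_cells g -> block_of (blockmap g v) = block_of v.
Proof.
rewrite /blockmap => g_cells; case E: (block_of v) => [a|] //.
have [Aa av] := block_ofP E.
exact: block_of_eq Aa (in_block_vert av (g_cells _ (block_index_lt av))).
Qed.

Lemma blockmap_comp g1 g2 : maps_cells g1 ->
  blockmap g2 \o blockmap g1 =1 blockmap (g2 \o g1).
Proof.
move=> g1_cells v; rewrite /= {1}/blockmap block_of_blockmap // /blockmap.
case E: (block_of v) => [a|] //; have [_ av] := block_ofP E.
by rewrite (block_vertK av) // g1_cells // block_index_lt.
Qed.

Lemma blockmap_id g : (forall n, n < 6 -> g n = n) -> blockmap g =1 id.
Proof.
move=> g_id v; rewrite /blockmap; case E: (block_of v) => [a|] //.
by have [_ av] := block_ofP E; rewrite g_id ?block_indexK ?block_index_lt.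
Qed.

Lemma run_blockmap w : all local_step w ->
  run (map (fun t => blockmap (table t)) w) =1 blockmap (lrun w).
Proof.
elim/last_ind: w => [_|w t IH]; first by move=> v; rewrite blockmap_id.
rewrite all_rcons => /andP [step_t step_w] v.
rewrite map_rcons run_rcons /= IH //.
have /= -> := blockmap_comp (table t) (lrun_cells step_w) v.
by rewrite /lrun map_rcons run_rcons.
Qed.

Lemma blockmap_valid_step t : local_step t -> valid_step (blockmap (table t)).
Proof.
move=> step; have t_cells : maps_cells (table t) by move=> n /(local_stepP step) [].
split.
- move=> v; rewrite /blockmap; case E: (block_of v) => [a|]; last by left.
  have [_ av] := block_ofP E; have n6 := block_index_lt av.
  have [t6 [fix_n | adj] _ _] := local_stepP step n6.
    by left; rewrite fix_n block_indexK.
  by right; rewrite -(ladj_block av (in_block_vert av t6)) (block_vertK av).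
- move=> u v eq_uv.
  have := block_of_blockmap v t_cells; rewrite -eq_uv block_of_blockmap //.
  move: eq_uv; rewrite /blockmap.
  case Eu: (block_of u) => [a|]; case Ev: (block_of v) => [b|] //= eq_uv [eq_ab].
  subst b; have [_ au] := block_ofP Eu; have [_ av] := block_ofP Ev.
  have u6 := block_index_lt au; have v6 := block_index_lt av.
  move/(congr1 (block_index a)): eq_uv; rewrite !(block_vertK au) ?t_cells //.
  by case: (local_stepP step u6) => _ _ _ /(_ _ v6) inj /inj /(block_index_inj au av).
- move=> v; have /= -> := blockmap_comp (table t) t_cells v; rewrite /blockmap.
  case E: (block_of v) => [a|] //; have [_ av] := block_ofP E.
  have n6 := block_index_lt av.
  move/(congr1 (block_index a)); rewrite (block_vertK av) ?t_cells //.
  by case: (local_stepP step n6) => _ _ noswap _ /noswap ->; rewrite block_indexK.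
Qed.

End BlockMap.
End Grid.

Definition phases := 6 * size keys.
Definition phase_gadget (p : nat) : seq (seq nat) := gadget (p %/ 6).
Definition phase_moves (p : nat) : seq (nat * seq nat) := [seq (p, t) | t <- phase_gadget p].
Definition moves_upto (n : nat) : seq (nat * seq nat) := flatten [seq phase_moves p | p <- iota 0 n].
Definition moves := moves_upto phases.

Lemma size_moves : size moves = 150.
Proof. by vm_compute. Qed.

Lemma moves_upto_local_step n pt : pt \in moves_upto n -> local_step pt.2.
Proof.
case/flatten_mapP => p _ /mapP [t t_in ->].
exact: (allP (gadget_local_step _) _ t_in).
Qed.

Lemma moves_uptoS n : moves_upto n.+1 = moves_upto n ++ phase_moves n.
Proof. by rewrite /moves_upto -addn1 iotaD map_cat flatten_cat /= cats0. Qed.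

Section Edges.
Variables ml ms : nat.
Local Notation V := (gvert ml ms).

Definition anchor (e : V * V) : V :=
  (insubd e.1.1 (minn (minn e.1.1 e.2.1) (ml - 3)),
   insubd e.1.2 (minn (minn e.1.2 e.2.2) (ms - 2))).

Lemma anchor_coord e :
  (anchor e).1 = minn (minn e.1.1 e.2.1) (ml - 3) :> nat /\
  (anchor e).2 = minn (minn e.1.2 e.2.2) (ms - 2) :> nat.
Proof.
case: e => [[u1 u2] [w1 w2]]; rewrite /= !val_insubd.
have := ltn_ord u1; have := ltn_ord u2.
by split; case: ifP => // /negbT; lia.
Qed.

(* Edges of one phase have anchors congruent modulo (3, 2), hence disjoint
   blocks, and all need the same gadget. *)
Definition phase (e : V * V) : nat :=
  (anchor e).1 %% 3 + 3 * ((anchor e).2 %% 2) +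
  6 * kind (block_index (anchor e) e.1) (block_index (anchor e) e.2).

Variable M : {set V * V}.

Definition active (p : nat) (a : V) : bool :=
  [exists e in M, (phase e == p) && (anchor e == a)].

Lemma active_residues p a : active p a -> a.1 %% 3 = p %% 3 /\ a.2 %% 2 = p %/ 3 %% 2.
Proof. by case/existsP => e /and3P [_ /eqP <- /eqP <-]; rewrite /phase; lia. Qed.

Lemma active_disjoint p a b v : active p a -> active p b -> in_block a v -> in_block b v -> a = b.
Proof.
move=> /active_residues [a1 a2] /active_residues [b1 b2].
move: a1 a2 b1 b2; case: a b v => [a1 a2] [b1 b2] [v1 v2].
rewrite /in_block /= => ? ? ? ? /and4P [? ? _ _] /and4P [? ? _ _].
by apply: gvert_eq => /=; lia.
Qed.

Definition phase_map (p : nat) : V -> V := blockmap (active p) (lrun (phase_gadget p)).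

Definition move (pt : nat * seq nat) : V -> V := blockmap (active pt.1) (table pt.2).

Lemma move_valid_step pt : pt \in moves -> valid_step (move pt).
Proof.
move=> /moves_upto_local_step step.
exact: (blockmap_valid_step (@active_disjoint pt.1)).
Qed.

Lemma run_phase_moves p : run (map move (phase_moves p)) =1 phase_map p.
Proof. by rewrite -map_comp; apply: (run_blockmap (@active_disjoint p)); apply: gadget_local_step. Qed.

Hypotheses (ml3 : 3 <= ml) (ms2 : 2 <= ms).

Lemma edge_in_block e : gadj e.1 e.2 -> in_block (anchor e) e.1 /\ in_block (anchor e) e.2.
Proof.
have [a1 a2] := anchor_coord e; rewrite /in_block a1 a2.
case: e {a1 a2} => [[u1 u2] [w1 w2]]; rewrite /gadj /= => adj.
have := ltn_ord u1; have := ltn_ord u2; have := ltn_ord w1; have := ltn_ord w2.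
by split; lia.
Qed.

Lemma phase_edge e : gadj e.1 e.2 ->
  phase e < phases /\ forall n, n < 6 ->
  lrun (phase_gadget (phase e)) n =
    swap (block_index (anchor e) e.1) (block_index (anchor e) e.2) n.
Proof.
move=> adj; have [in1 in2] := edge_in_block adj.
have i6 := block_index_lt in1; have j6 := block_index_lt in2.
have := gadget_kind_swap i6 j6; rewrite (ladj_block in1 in2) => /(_ adj) [kind_lt swap_ok].
have -> : phase_gadget (phase e) =
          gadget (kind (block_index (anchor e) e.1) (block_index (anchor e) e.2)).
  by rewrite /phase_gadget /phase; congr gadget; lia.
by split=> //; rewrite /phase /phases; lia.
Qed.

Hypothesis M_disjoint : disjoint_edges M.

Lemma phase_map_block f v : f \in M -> in_block (anchor f) v ->
  phase_map (phase f) v =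
    block_vert (anchor f) (swap (block_index (anchor f) f.1) (block_index (anchor f) f.2)
                                (block_index (anchor f) v)).
Proof.
move=> fM fv; have adj := M_disjoint.1 f fM.
have active_f : active (phase f) (anchor f) by apply/existsP; exists f; rewrite fM !eqxx.
rewrite /phase_map (blockmap_in (@active_disjoint _) _ active_f fv).
by rewrite (proj2 (phase_edge adj)) // block_index_lt.
Qed.

Lemma phase_map_edge e : e \in M ->
  phase_map (phase e) e.1 = e.2 /\ phase_map (phase e) e.2 = e.1.
Proof.
move=> eM; have adj := M_disjoint.1 e eM; have [in1 in2] := edge_in_block adj.
have neq : block_index (anchor e) e.2 == block_index (anchor e) e.1 = false.
  by apply/negbTE/eqP => /(block_index_inj in2 in1) eq21; move: adj; rewrite eq21 gadj_irr.
by rewrite !phase_map_block // /swap eqxx ?neq eqxx !(block_indexK in1, block_indexK in2).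
Qed.

Lemma phase_map_fixed p v :
  (forall f, f \in M -> phase f = p -> v <> f.1 /\ v <> f.2) -> phase_map p v = v.
Proof.
move=> avoid; case E: (block_of (active p) v) => [a|]; last by rewrite /phase_map /blockmap E.
have [/existsP [f /and3P [fM /eqP fp /eqP fa]] av] := block_ofP E; subst p a.
have [in1 in2] := edge_in_block (M_disjoint.1 f fM); have [ne1 ne2] := avoid f fM erefl.
rewrite phase_map_block // /swap.
have /negbTE -> : block_index (anchor f) v != block_index (anchor f) f.1.
  by apply/eqP => /(block_index_inj av in1).
have /negbTE -> : block_index (anchor f) v != block_index (anchor f) f.2.
  by apply/eqP => /(block_index_inj av in2).
exact: block_indexK.
Qed.

Definition flipped_below (p : nat) (c : config ml ms) : Prop :=
  (forall e, e \in M -> phase e < p -> c e.1 = e.2 /\ c e.2 = e.1) /\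
  (forall v, (forall e, e \in M -> phase e < p -> v <> e.1 /\ v <> e.2) -> c v = v).

Lemma endpoints_disjoint e f u : e \in M -> f \in M -> phase e <> phase f ->
  u = e.1 \/ u = e.2 -> u <> f.1 /\ u <> f.2.
Proof.
move=> eM fM neq_phase; have neq_ef : e <> f by move=> eq_ef; apply: neq_phase; rewrite eq_ef.
by have [? ? ? ?] := M_disjoint.2 e f eM fM neq_ef; case=> ->.
Qed.

Lemma flipped_below_step p c c' : (forall v, c' v = phase_map p (c v)) ->
  flipped_below p c -> flipped_below p.+1 c'.
Proof.
move=> def_c' [flipped fixed]; split => [e eM | v avoid]; rewrite ?def_c'; last first.
  rewrite fixed => [|e eM lt_p]; last by apply: avoid; rewrite // ltnW.
  by apply: phase_map_fixed => f fM ph_f; apply: avoid; rewrite // ph_f.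
rewrite ltnS => le_p; have [lt_p | ge_p] := ltnP (phase e) p.
  have [-> ->] := flipped e eM lt_p.
  by split; apply: phase_map_fixed => f fM ph_f; apply: (endpoints_disjoint eM fM); auto; lia.
have <- : phase e = p by lia.
rewrite !fixed => [|f fM lt_f|f fM lt_f]; first exact: phase_map_edge;
  by apply: (endpoints_disjoint eM fM); auto; lia.
Qed.

Lemma flipped_below_moves n : flipped_below n (run (map move (moves_upto n))).
Proof.
elim: n => [|n IH]; first by split=> // v.
apply: flipped_below_step IH => v.
by rewrite moves_uptoS map_cat run_cat /= run_phase_moves.
Qed.

Lemma flip_result_moves : flip_result M (run (map move moves)).
Proof.
have [flipped fixed] := flipped_below_moves phases.
have phase_lt e : e \in M -> phase e < phases by move=> eM; case: (phase_edge (M_disjoint.1 e eM)).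
split=> [e eM | v uncovered]; first by apply: flipped; rewrite ?phase_lt.
by apply: fixed => e eM _; split=> eq_v; apply: uncovered; exists e; auto.
Qed.

End Edges.

Theorem lemma2 : exists C : nat,
  forall (ml ms : nat), ms <= ml -> 3 <= ml -> 2 <= ms ->
  forall M : {set gvert ml ms * gvert ml ms}, disjoint_edges M ->
  exists (k : nat) (c : nat -> config ml ms),
    [/\ k <= C, c 0 = id,
        (forall t, t < k -> valid_move (c t) (c t.+1)) &
        flip_result M (c k)].
Proof.
exists 150 => ml ms _ ml3 ms2 M M_disjoint.
exists (size moves), (fun t => run (map (move M) (take t moves))); split.
- by rewrite size_moves.
- by rewrite take0.
- move=> t t_lt; rewrite (take_nth (0, [::]) t_lt) map_rcons run_rcons.
  apply: valid_move_step; last exact: move_valid_step (mem_nth _ t_lt).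
  by apply: run_map_inj => pt /mem_take /(move_valid_step M) [].
- by rewrite take_size; apply: flip_result_moves.
Qed.
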